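(* Let $I=[1/2,1)$. For every dyadic rational $y\in I$ (i.e. $y$ has a finite binary expansion), the value $B(y)$ of the binary function defined below lies in $I$. In other words, $B$ maps the dyadic rationals of $I$ into $I$.
   Context: Every dyadic rational $y\in[1/2,1)$ has a unique finite binary expansion $y=(0.1\,a_{2}\cdots a_{\ell})_2$ with last digit $a_\ell=1$; the integer $\ell\ge 1$ is called the (total) length of $y$ (equivalently, $\ell$ is the least integer with $2^{\ell}y\in\mathbb{Z}$, and then $2^\ell y$ is odd). For $n\ge 0$ let $y^*_n=(0.1\{01\}^n)_2$, where $\{01\}^n$ denotes $n$ consecutive repetitions of the block $01$ (so $y^*_0=1/2$, $y^*_1=(0.101)_2=5/8$, etc.), and let $\mathcal{N}=\{y^*_n : n\ge 0\}$ (the ''predecessors''). The binary function is defined, for a dyadic rational $y\in[1/2,1)$ of length $\ell$, by $$B(y)=\begin{cases}1/2, & y\in\mathcal{N},\\ (3y+2^{-\ell})/2, & y\in[1/2,2/3]\setminus\mathcal{N},\\ (3y+2^{-\ell})/4, & y\in(2/3,1).\end{cases}$$ *)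

From mathcomp Require Import all_boot all_order all_algebra.
From mathcomp Require Import boolp.
Set Implicit Arguments. Unset Strict Implicit. Unset Printing Implicit Defensive.
Import Order.TTheory GRing.Theory Num.Theory.
Local Open Scope ring_scope.

Definition dyadic (y : rat) : Prop := exists l : nat, (2%:R ^+ l * y) \is a Num.int.

Definition dyadic_length (y : rat) (l : nat) : Prop :=
  (2%:R ^+ l * y) \is a Num.int /\
  forall m : nat, (2%:R ^+ m * y) \is a Num.int -> (l <= m)%N.

(* y*_n = (0.1{01}^n)_2 = 1/2 + sum_{i=1}^n 2^{-(2i+1)} *)
Definition ystar (n : nat) : rat :=
  2%:R^-1 + \sum_(1 <= i < n.+1) (2%:R ^+ (2 * i).+1)^-1.

Definition predecessor (y : rat) : Prop := exists n : nat, y = ystar n.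

Definition Bfun (y : rat) (l : nat) : rat :=
  if `[< predecessor y >] then 2%:R^-1
  else if y <= 2%:R / 3%:R then (3%:R * y + (2%:R ^+ l)^-1) / 2%:R
  else (3%:R * y + (2%:R ^+ l)^-1) / 4%:R.

From mathcomp Require Import all_boot all_order all_algebra.
From mathcomp Require Import boolp ring lra zify.
Import Order.TTheory GRing.Theory Num.Theory.
Local Open Scope ring_scope.

(* Write y = K / 2^l with K a natural number.  If y > 2/3, then
   2^(l+1) < 3K < 3 * 2^l and B(y) = (3K+1) / 2^(l+2) lies in [1/2, 1).
   If y <= 2/3, then 3K <= 2^(l+1), and B(y) = (3K+1) / 2^(l+1) < 1 unless
   3K or 3K+1 equals 2^(l+1).  The first is impossible modulo 3; the second
   forces l to be odd and y = (2^(l+1) - 1) / (3 * 2^l) = y*_((l-1)/2), a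
   predecessor, for which B(y) = 1/2 by definition. *)

Lemma exp2_mod3 (m : nat) : (2 ^ m %% 3 = if odd m then 2 else 1)%N.
Proof. elim: m => [//|m IH]; rewrite expnS -modnMmr IH /=; by case: (odd m). Qed.

Lemma ystarE (n : nat) :
  ystar n = (2%:R ^+ (2 * n).+2 - 1) / (3%:R * 2%:R ^+ (2 * n).+1).
Proof.
rewrite /ystar; elim: n => [|n IH]; first by rewrite big_geq //= addr0; field.
rewrite big_nat_recr //= addrA IH.
have -> : (2 * n.+1 = (2 * n).+2)%N by lia.
rewrite !exprS; field.
by rewrite expf_neq0.
Qed.

Lemma predecessor_of_eq (K l : nat) :
  (3 * K).+1 = (2 ^ l.+1)%N -> predecessor (K%:R / 2%:R ^+ l).
Proof.
move=> KE; have /= l_odd : odd l.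
  by move: (exp2_mod3 l.+1); rewrite -KE -addn1 -modnDml modnMr /=; case: (odd l).
have lE : (2 * l./2).+1 = l.
  by rewrite -[RHS]odd_double_half l_odd -muln2 mulnC.
exists l./2; rewrite ystarE lE.
have KE' : 3%:R * K%:R + 1 = 2%:R ^+ l.+1 :> rat.
  by rewrite -natrM -natrX -KE mulrSr.
rewrite -KE'; field.
by rewrite expf_neq0.
Qed.

Lemma three_mul_succ_lt_exp2 {K l : nat} :
  (3 * K <= 2 ^ l.+1)%N -> ~ predecessor (K%:R / 2%:R ^+ l) ->
  ((3 * K).+1 < 2 ^ l.+1)%N.
Proof.
rewrite leq_eqVlt => /orP [/eqP KE | KP] not_pred.
  by move: (exp2_mod3 l.+1); rewrite -KE modnMr; case: (odd _).
move: KP; rewrite leq_eqVlt => /orP [/eqP KE | //].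
by case: not_pred; apply: predecessor_of_eq.
Qed.

Theorem mainTheorem1 (y : rat) (l : nat) :
  dyadic y -> 2%:R^-1 <= y -> y < 1 -> dyadic_length y l ->
  2%:R^-1 <= Bfun y l /\ Bfun y l < 1.
Proof.
move=> _ y_ge y_lt [y_int _].
have P_gt0 : 0 < 2%:R ^+ l :> rat by rewrite exprn_gt0.
have /natrP [K yK] : 2%:R ^+ l * y \is a Num.nat.
  by rewrite natrEint y_int mulr_ge0 ?ltW //; lra.
have PE : (2 ^ l)%:R = 2%:R ^+ l :> rat by rewrite natrX.
set P := 2%:R ^+ l in yK P_gt0 PE *.
have yE : y = K%:R / P by rewrite -yK mulrC mulKf ?gt_eqF.
have PV : P^-1 * P = 1 by rewrite mulVf ?gt_eqF.
rewrite /Bfun; case: asboolP => [_ | not_pred]; first by split; lra.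
rewrite -/P; case: ifP => [y_le | /negbT y_gt].
  have K_le : (3 * K <= 2 ^ l.+1)%N.
    by rewrite -(ler_nat rat) natrM expnS natrM PE; nra.
  rewrite yE in not_pred.
  have := three_mul_succ_lt_exp2 K_le not_pred.
  rewrite -(ltr_nat rat) mulrSr natrM expnS natrM PE => K_lt.
  split; nra.
have K_lt : (K < 2 ^ l)%N by rewrite -(ltr_nat rat) PE; nra.
move: K_lt; rewrite -(ler_nat rat) PE mulrSr => K_lt.
split; nra.
Qed.
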